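(* Let $\Gamma$ be a marked graph (the core) with vertices $v_1,\dots,v_m$ and real marks $n_1,\dots,n_m$. For each $i$ let $C_{i1},\dots,C_{is_i}$ be finitely many chains $C_{ij}=[c^{ij}_1,\dots,c^{ij}_{k_{ij}}]$ ($k_{ij}\ge1$) of integers with $c^{ij}_1\ge1$ and $c^{ij}_l\ge2$ for $l\ge2$. Put $p_{ij}=|c^{ij}_1,\dots,c^{ij}_{k_{ij}}|$ and $q_{ij}=|c^{ij}_2,\dots,c^{ij}_{k_{ij}}|$ (so $p_{ij}/q_{ij}=c^{ij}_1-\cfrac{1}{c^{ij}_2-\cfrac{1}{\ddots}}$). Let $\widehat\Gamma$ be the hairy graph obtained by grafting: the mark of $v_i$ is replaced by $n_i+\sum_j c^{ij}_1$, and for each $(i,j)$ the chain $[c^{ij}_2,\dots,c^{ij}_{k_{ij}}]$ (if nonempty) is attached, with its vertex marked $c^{ij}_2$ joined to $v_i$ by a single edge. Then $$\det\widehat\Gamma=\det\Gamma\Big(n_i+\sum_j\frac{p_{ij}}{q_{ij}}\Big)\cdot\prod_{i,j}q_{ij},$$ where $\Gamma(n_i+\sum_j p_{ij}/q_{ij})$ denotes the core graph with the mark of $v_i$ replaced by $n_i+\sum_j p_{ij}/q_{ij}$. Alternatively, $$\det\widehat\Gamma=\det\widetilde\Gamma\cdot\prod_{i,j}(-p_{ij}),$$ where $\widetilde\Gamma$ is obtained from the core graph $\Gamma$ with its original marks $n_i$ by adding, for each pair $(i,j)$, one new vertex with mark $-q_{ij}/p_{ij}$ joined to $v_i$ by a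 single edge.
   Context: A marked graph is a finite graph without loops in which each vertex carries a real number (its mark); its determinant is the determinant of the matrix with the marks on the diagonal and minus the number of edges between $u$ and $v$ in the off-diagonal $(u,v)$ entry; the empty graph has determinant $1$. $|a_1,\dots,a_k|$ denotes the determinant of the chain with marks $a_1,\dots,a_k$ (tridiagonal matrix with diagonal $a_i$ and off-diagonal entries $-1$), and the empty chain has determinant $1$. *)

From HB Require Import structures.
From mathcomp Require Import all_boot all_order all_algebra all_fingroup.
Set Implicit Arguments. Unset Strict Implicit. Unset Printing Implicit Defensive.
Import Order.TTheory GRing.Theory Num.Theory.
Local Open Scope ring_scope.

(* A marked graph on a finite vertex type V: marks (real numbers) and
   multiplicities of edges between vertices (diagonal ignored: no loops). *)
Definition gmatrix (R : pzRingType) (V : finType) (mark : V -> R)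
  (edge : V -> V -> nat) (u v : V) : R :=
  if u == v then mark u else - (edge u v)%:R.

Definition gdet (R : comPzRingType) (V : finType) (mark : V -> R)
  (edge : V -> V -> nat) : R :=
  \sum_(s : {perm V}) (-1) ^+ s * \prod_(v : V) gmatrix mark edge v (s v).

Definition chain_edge (k : nat) (u v : 'I_k) : nat :=
  ((u.+1 == v :> nat) || (v.+1 == u :> nat))%N.

Definition chain_det (R : comPzRingType) (a : seq R) : R :=
  gdet (fun u : 'I_(size a) => a`_u) (@chain_edge (size a)).

Unset Implicit Arguments.
Section Grafting.
Variables (R : realFieldType) (m : nat) (n : 'I_m -> R)
  (e : 'I_m -> 'I_m -> nat) (s : 'I_m -> nat)
  (k : forall i : 'I_m, 'I_(s i) -> nat)
  (c : forall i : 'I_m, 'I_(s i) -> nat -> int).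
(* chain C_ij = [c i j 0; ...; c i j (k i j - 1)] (0-based indexing) *)

Definition pC (i : 'I_m) (j : 'I_(s i)) : R :=
  chain_det [seq (c i j l)%:~R | l <- iota 0 (k i j)].
Definition qC (i : 'I_m) (j : 'I_(s i)) : R :=
  chain_det [seq (c i j l)%:~R | l <- iota 1 (k i j).-1].

(* Tail vertices of the hairy graph: (i, j, l) stands for the entry
   c i j (l+1) of the chain C_ij, l < k_ij - 1. *)
Definition tailV : finType :=
  {i : 'I_m & {j : 'I_(s i) & 'I_(k i j).-1}}.
Definition tv_i (x : tailV) : nat := tag x.
Definition tv_j (x : tailV) : nat := tag (tagged x).
Definition tv_l (x : tailV) : nat := tagged (tagged x).

Definition hatV : finType := ('I_m + tailV)%type.

Definition hat_mark (x : hatV) : R :=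
  match x with
  | inl v => n v + \sum_(j < s v) (c v j 0)%:~R
  | inr t => (c (tag t) (tag (tagged t)) (tv_l t).+1)%:~R
  end.

Definition hat_edge (x y : hatV) : nat :=
  match x, y with
  | inl u, inl v => e u v
  | inl u, inr t => ((u == tv_i t :> nat) && (tv_l t == 0))%N
  | inr t, inl u => ((u == tv_i t :> nat) && (tv_l t == 0))%N
  | inr t, inr t' => [&& tv_i t == tv_i t', tv_j t == tv_j t' &
                        ((tv_l t).+1 == tv_l t') || ((tv_l t').+1 == tv_l t)]
  end.

Definition leafV : finType := {i : 'I_m & 'I_(s i)}.
Definition tildeV : finType := ('I_m + leafV)%type.

Definition tilde_mark (x : tildeV) : R :=
  match x with
  | inl v => n v
  | inr t => - (qC (tag t) (tagged t) / pC (tag t) (tagged t))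
  end.

Definition tilde_edge (x y : tildeV) : nat :=
  match x, y with
  | inl u, inl v => e u v
  | inl u, inr t => (u == tag t)%N
  | inr t, inl u => (u == tag t)%N
  | inr _, inr _ => 0%N
  end.
End Grafting.

From mathcomp Require Import all_boot all_order all_algebra all_fingroup.
From mathcomp Require Import ring lra zify.
Set Implicit Arguments. Unset Strict Implicit. Unset Printing Implicit Defensive.
Import Order.TTheory GRing.Theory Num.Theory.
Local Open Scope ring_scope.

(* Both determinants are computed by a Schur complement with respect to the
   hairs.  Order the chain [c_2, ..., c_k] grafted at v_i as a tridiagonal block
   T; its only link to the core is the edge from its first vertex to v_i.  The
   vector x_l = det [c_{l+2}, ..., c_k] (l = 1, ..., k-1) solves T x = q e_1,
   so eliminating the hair multiplies the determinant by det T = q and lowers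
   the mark of v_i by det [c_3, ..., c_k] / q, which turns c_1 into
   (c_1 q - det [c_3, ..., c_k]) / q = p / q.  A leaf of mark -q/p has the same
   effect, lowering the mark by -1/(-q/p) = p/q and contributing the factor
   -q/p; hence both graphs reduce to the core with marks n_i + sum_j p_ij/q_ij.
   Positivity of p and q comes from the classical bound
   0 <= det [a_2, ..., a_k] < det [a_1, ..., a_k] for chains with all a_l >= 2. *)

Section ConjPerm.
Variables (V W : finType) (f : V -> W) (g : W -> V).
Hypotheses (fK : cancel f g) (gK : cancel g f).
Local Open Scope group_scope.

Lemma conj_perm_inj (s : {perm V}) : injective (f \o s \o g).
Proof. by move=> x y /= /(can_inj fK) /(@perm_inj _ s) /(can_inj gK). Qed.

Definition conj_perm (s : {perm V}) : {perm W} := perm (@conj_perm_inj s).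

Lemma conj_permE s w : conj_perm s w = f (s (g w)).
Proof. by rewrite permE. Qed.

Lemma conj_permM s t : conj_perm (s * t) = conj_perm s * conj_perm t.
Proof. by apply/permP => w; rewrite permM !conj_permE permM fK. Qed.

Lemma conj_perm1 : conj_perm 1 = 1.
Proof. by apply/permP => w; rewrite conj_permE !perm1 gK. Qed.

Lemma conj_tperm x y : conj_perm (tperm x y) = tperm (f x) (f y).
Proof.
apply/permP => w; rewrite conj_permE -{2}[w]gK.
by rewrite !permE /= !(inj_eq (can_inj fK)); case: (_ == x); case: (_ == y).
Qed.

Lemma odd_conj_perm s : odd_perm (conj_perm s) = odd_perm s.
Proof.
have [ts -> dts] := prod_tpermP s.
have -> : conj_perm (\prod_(t <- ts) tperm t.1 t.2)
    = \prod_(t <- [seq (f t.1, f t.2) | t <- ts]) tperm t.1 t.2.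
  elim: ts {dts} => [|t ts IH]; first by rewrite !big_nil conj_perm1.
  by rewrite /= !big_cons conj_permM conj_tperm IH.
rewrite !odd_perm_prod ?size_map // all_map.
by apply: sub_all dts => -[a b]; rewrite /dpair /= (inj_eq (can_inj fK)).
Qed.

End ConjPerm.

Section FunDet.
Variable R : comPzRingType.

Definition fdet (V : finType) (M : V -> V -> R) : R :=
  \sum_(s : {perm V}) (-1) ^+ s * \prod_v M v (s v).

Lemma gdetE (V : finType) (mark : V -> R) (edge : V -> V -> nat) :
  gdet mark edge = fdet (gmatrix mark edge).
Proof. by []. Qed.

Lemma eq_fdet (V : finType) (M N : V -> V -> R) :
  (forall x y, M x y = N x y) -> fdet M = fdet N.
Proof.
by move=> eqMN; apply: eq_bigr => s _; congr (_ * _); apply: eq_bigr.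
Qed.

Lemma det_fdet n (A : 'M[R]_n) : \det A = fdet (fun i j => A i j).
Proof. by []. Qed.

Lemma fdet_reindex (V W : finType) (f : V -> W) (M : W -> W -> R) :
  bijective f -> fdet M = fdet (fun x y => M (f x) (f y)).
Proof.
case=> g fK gK; rewrite /fdet (reindex (conj_perm fK gK)); last first.
  by apply: onW_bij; exists (conj_perm gK fK) => s;
     apply/permP => v; rewrite !conj_permE ?fK ?gK.
apply: eq_bigr => s _; rewrite odd_conj_perm; congr (_ * _).
rewrite (reindex f); last by apply: onW_bij; exists g.
by apply: eq_bigr => v _; rewrite conj_permE fK.
Qed.

Lemma fdet_card0 (V : finType) (M : V -> V -> R) : #|V| = 0%N -> fdet M = 1.
Proof.
move=> V0; have V_empty (v : V) : false by have := card0_eq V0 v; rewrite inE.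
rewrite /fdet (big_pred1 1%g) => [|s]; last first.
  by apply/esym/eqP/permP => v; have := V_empty v.
by rewrite odd_perm1 mul1r big_pred0 // => v; have := V_empty v.
Qed.

Lemma fdet_diag (V : finType) (M : V -> V -> R) :
  (forall x y, x != y -> M x y = 0) -> fdet M = \prod_v M v v.
Proof.
move=> M_diag; rewrite /fdet (bigD1 1%g) //= odd_perm1 mul1r.
rewrite [X in _ + X]big1 ?addr0 => [|s s_neq1].
  by apply: eq_bigr => v _; rewrite perm1.
have [v sv_neq_v] : exists v, s v != v.
  apply/existsP; apply: contraNT s_neq1 => /existsPn s_fix.
  by apply/eqP/permP => v; rewrite perm1; apply/eqP/negbNE.
by rewrite (bigD1 v) //= M_diag 1?eq_sym // mul0r mulr0.
Qed.

Lemma sum_enum_val (T : finType) (F : T -> R) :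
  \sum_(i < #|T|) F (enum_val i) = \sum_x F x.
Proof. by apply/esym/reindex/onW_bij/enum_val_bij. Qed.

End FunDet.

Section Schur.
Variable R : comPzRingType.

Lemma fdet_schur (A B : finType) (M : A + B -> A + B -> R) (X : B -> A -> R) :
  (forall b a, \sum_b' M (inr b) (inr b') * X b' a = M (inr b) (inl a)) ->
  fdet M = fdet (fun b b' => M (inr b) (inr b')) *
           fdet (fun a a' => M (inl a) (inl a') - \sum_b M (inl a) (inr b) * X b a').
Proof.
move=> DX_C.
pose h (i : 'I_(#|A| + #|B|)) : A + B :=
  match split i with inl i => inl (enum_val i) | inr j => inr (enum_val j) end.
pose h' (x : A + B) : 'I_(#|A| + #|B|) :=
  match x with
  | inl a => lshift #|B| (enum_rank a) | inr b => rshift #|A| (enum_rank b) end.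
have h_bij : bijective h.
  exists h' => [i|[x|x]]; rewrite /h /h'.
  - by rewrite -[i]splitK; case: (split i) => j; rewrite unsplitK enum_valK.
  - by rewrite -[lshift _ _]/(unsplit (inl _)) unsplitK enum_rankK.
  - by rewrite -[rshift _ _]/(unsplit (inr _)) unsplitK enum_rankK.
pose P := \matrix_(i, j) M (inl (enum_val i)) (inl (enum_val j)) : 'M_#|A|.
pose Q := \matrix_(i, j) M (inl (enum_val i)) (inr (enum_val j)) : 'M_(#|A|, #|B|).
pose C := \matrix_(i, j) M (inr (enum_val i)) (inl (enum_val j)) : 'M_(#|B|, #|A|).
pose D := \matrix_(i, j) M (inr (enum_val i)) (inr (enum_val j)) : 'M_#|B|.
pose Xm := \matrix_(i, j) X (enum_val i) (enum_val j) : 'M_(#|B|, #|A|).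
have -> : fdet M = \det (block_mx P Q C D).
  rewrite (fdet_reindex M h_bij) det_fdet; apply: eq_fdet => i j.
  rewrite -[i]splitK -[j]splitK /h.
  by case: (split i) => i'; case: (split j) => j';
    rewrite ?block_mxEul ?block_mxEur ?block_mxEdl ?block_mxEdr mxE
      -?[lshift _ _]/(unsplit (inl _)) -?[rshift _ _]/(unsplit (inr _)) !unsplitK.
have DXm_C : D *m Xm = C.
  apply/matrixP => i j; rewrite !mxE -DX_C -[RHS]sum_enum_val.
  by apply: eq_bigr => l _; rewrite !mxE.
have -> : block_mx P Q C D = block_mx (P - Q *m Xm) Q 0 D *m block_mx 1%:M 0 Xm 1%:M.
  by rewrite mulmx_block !mulmx1 !mulmx0 !add0r DXm_C subrK.
rewrite det_mulmx det_ublock det_lblock !det1 !mulr1 mulrC.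
congr (_ * _); rewrite det_fdet.
  by rewrite [RHS](fdet_reindex _ (enum_val_bij B)); apply: eq_fdet => i j; rewrite mxE.
rewrite [RHS](fdet_reindex _ (enum_val_bij A)); apply: eq_fdet => i j.
rewrite !mxE -[in RHS]sum_enum_val; congr (_ - _).
by apply: eq_bigr => l _; rewrite !mxE.
Qed.

Lemma fdet_ublock (A B : finType) (M : A + B -> A + B -> R) :
  (forall b a, M (inr b) (inl a) = 0) ->
  fdet M = fdet (fun b b' => M (inr b) (inr b')) * fdet (fun a a' => M (inl a) (inl a')).
Proof.
move=> M_dl; rewrite (@fdet_schur _ _ _ (fun _ _ => 0)) => [|b a].
  by congr (_ * _); apply: eq_fdet => a a'; rewrite big1 ?subr0 // => b _; rewrite mulr0.
by rewrite M_dl big1 // => b' _; rewrite mulr0.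
Qed.

Lemma fdet_block_diag (V I : finType) (tau : V -> I) (M : V -> V -> R) :
  (forall x y, tau x != tau y -> M x y = 0) ->
  fdet M = \prod_i fdet (fun x y : {x | tau x == i} => M (val x) (val y)).
Proof.
move=> M_off.
suff fdet_on (r : seq I) : uniq r ->
    fdet (fun x y : {x | tau x \in r} => M (val x) (val y))
    = \prod_(i <- r) fdet (fun x y : {x | tau x == i} => M (val x) (val y)).
  have val_bij : bijective (val : {x | tau x \in enum I} -> V).
    by exists (fun x => exist _ x (mem_enum predT (tau x))) => // x; apply: val_inj.
  by rewrite (fdet_reindex M val_bij) fdet_on ?enum_uniq // big_enum.
elim: r => [_|i r IH /= /andP[i_notin_r r_uniq]].
  by rewrite big_nil fdet_card0 // card_sig; apply: eq_card0.
pose h (u : {x | tau x == i} + {x | tau x \in r}) : {x | tau x \in i :: r} :=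
  match u with
  | inl y => exist _ (val y) (introT orP (or_introl (valP y)))
  | inr y => exist _ (val y) (introT orP (or_intror (valP y)))
  end.
have h_inj : injective h.
  case=> y [] z /(congr1 val) /= yz; try by congr (_ _); apply: val_inj.
    by move: (valP z); rewrite /= -yz (eqP (valP y)) (negbTE i_notin_r).
  by move: (valP y); rewrite /= yz (eqP (valP z)) (negbTE i_notin_r).
have h_surj x : exists u, h u = x.
  case tau_x: (tau (val x) == i).
    by exists (inl (exist (fun y => tau y == i) _ tau_x)); apply: val_inj.
  have tau_x_r : tau (val x) \in r by have := valP x; rewrite in_cons tau_x.
  by exists (inr (exist (fun y => tau y \in r) _ tau_x_r)); apply: val_inj.
have h_bij : bijective h.
  apply: (inj_card_bij h_inj); rewrite -(card_codom h_inj).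
  by apply/subset_leq_card/subsetP => x _; have [u <-] := h_surj x; apply: codom_f.
rewrite (fdet_reindex _ h_bij) fdet_ublock => [|b a] /=; last first.
  apply: M_off; rewrite (eqP (valP a)).
  by apply: contraNneq i_notin_r => <-; apply: (valP b).
by rewrite big_cons IH // mulrC.
Qed.

Lemma fdet_sigT_block (I : finType) (J : I -> finType) (M : {i & J i} -> {i & J i} -> R) :
  (forall x y, tag x != tag y -> M x y = 0) ->
  fdet M = \prod_i fdet (fun u v : J i => M (Tagged J u) (Tagged J v)).
Proof.
move=> M_off; rewrite (fdet_block_diag M_off); apply: eq_bigr => i _.
exact: (fdet_reindex _ (tag_with_bij J i)).
Qed.

End Schur.

Lemma big_sigT (R : Type) (idx : R) (op : Monoid.com_law idx) (I : finType)
    (J : I -> finType) (F : {i & J i} -> R) :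
  \big[op/idx]_x F x = \big[op/idx]_i \big[op/idx]_(j : J i) F (Tagged J j).
Proof.
rewrite (sig_big_dep (fun _ => true) (fun _ _ => true) (fun i j => F (Tagged J j))).
by apply: eq_bigr => -[].
Qed.

Section Chains.
Variable R : comPzRingType.
Implicit Types (t : seq R) (x : R).

Definition chain_mx t (u v : nat) : R :=
  if u == v then t`_u else - ((u.+1 == v) || (v.+1 == u))%:R.

Lemma chain_det_fdet t r : size t = r ->
  chain_det t = fdet (fun u v : 'I_r => chain_mx t u v).
Proof. by move=> <-; apply: eq_fdet. Qed.

Lemma chain_det_matrix t : chain_det t = \det (\matrix_(u, v < size t) chain_mx t u v).
Proof. by rewrite (chain_det_fdet (erefl _)) det_fdet; apply: eq_fdet => u v; rewrite mxE. Qed.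

Lemma chain_det_nil : chain_det [::] = 1 :> R.
Proof. exact: fdet_card0 (card_ord 0). Qed.

(* [0] rather than the empty chain's [1] once [l > size t], so that
   [drop_det_rec] also holds at the last entry. *)
Definition drop_det t (l : nat) : R := if (l <= size t)%N then chain_det (drop l t) else 0.

Lemma drop_det0 t : drop_det t 0 = chain_det t.
Proof. by rewrite /drop_det drop0. Qed.

Lemma drop_det1_cons x t : drop_det (x :: t) 1 = chain_det t.
Proof. by rewrite /drop_det /= drop0. Qed.

Lemma chain_det_cons x t : chain_det (x :: t) = x * chain_det t - drop_det t 1.
Proof.
have minor00 x' t' :
    row' ord0 (col' ord0 (\matrix_(u, v < size (x' :: t')) chain_mx (x' :: t') u v))
      = \matrix_(u, v < size t') chain_mx t' u v.
  by apply/matrixP => u v; rewrite !mxE !lift0.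
rewrite chain_det_matrix (expand_det_row _ ord0) big_ord_recl.
rewrite /cofactor minor00 -chain_det_matrix mxE expr0 mul1r.
case: t => [|y t]; first by rewrite big_ord0 addr0 /drop_det /= subr0.
rewrite drop_det1_cons big_ord_recl big1 ?addr0 => [|u _]; last first.
  by rewrite mxE /chain_mx !lift0 /= oppr0 mul0r.
rewrite mxE /chain_mx !lift0 /= mulN1r.
rewrite (expand_det_col _ ord0) big_ord_recl big1 ?addr0 => [|u _]; last first.
  by rewrite !mxE /chain_mx !lift0 /= oppr0 mul0r.
rewrite /cofactor !mxE /= expr1 expr0 !mulN1r mul1r opprK [chain_det t]chain_det_matrix.
congr (_ - \det _); apply/matrixP => u v.
by rewrite !mxE !lift0 /chain_mx /= /bump /= !add1n !eqSS.
Qed.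

Lemma drop_det_rec t l : (l < size t)%N ->
  drop_det t l = t`_l * drop_det t l.+1 - drop_det t l.+2.
Proof.
move=> lt_l; rewrite {1 2}/drop_det ltnW // lt_l (drop_nth 0 lt_l) chain_det_cons.
by rewrite /drop_det size_drop subn_gt0 drop_drop.
Qed.

Lemma sum_nat_delta (F : nat -> R) r j :
  \sum_(l < r) (l == j :> nat)%:R * F l = if (j < r)%N then F j else 0.
Proof.
rewrite -(big_ord1_eq +%R F j r) [RHS]big_mkcond; apply: eq_bigr => l _.
by case: (_ == _); rewrite ?mul1r ?mul0r.
Qed.

Lemma chain_mx_row_sum t r (F : nat -> R) l : (l < r)%N ->
  \sum_(l' < r) chain_mx t l l' * F l'
    = t`_l * F l - (if l is l0.+1 then F l0 else 0) - (if (l.+1 < r)%N then F l.+1 else 0).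
Proof.
move=> lt_l.
have chain_mx_delta l' : chain_mx t l l'
    = (l' == l)%:R * t`_l - (l'.+1 == l)%:R - (l' == l.+1)%:R.
  rewrite /chain_mx eq_sym; case: eqP => [->|/eqP ne].
    by rewrite (gtn_eqF (ltnSn l)) (ltn_eqF (ltnSn l)) mul1r !subr0.
  rewrite mul0r sub0r (eq_sym l.+1) orbC.
  case: eqP => [<-|_]; first by rewrite (@ltn_eqF l' l'.+2) //= subr0.
  by rewrite /= oppr0 sub0r.
under eq_bigr => l' _ do rewrite chain_mx_delta !mulrBl -mulrA.
rewrite !sumrB (sum_nat_delta (fun i => t`_l * F i)) lt_l (sum_nat_delta F _ l.+1).
congr (_ - _ - _); case: l lt_l {chain_mx_delta} => [|l0] lt_l.
  by rewrite big1 // => l' _; rewrite mul0r.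
by under eq_bigr => l' _ do rewrite eqSS; rewrite sum_nat_delta ltnW.
Qed.

Lemma chain_mx_drop_det t r l : size t = r -> (l < r)%N ->
  \sum_(l' < r) chain_mx t l l' * drop_det t l'.+1 = (l == 0)%:R * chain_det t.
Proof.
move=> size_t lt_l; rewrite (chain_mx_row_sum _ (fun l => drop_det t l.+1)) //.
have -> : (if (l.+1 < r)%N then drop_det t l.+2 else 0) = drop_det t l.+2.
  by case: ltnP => // le_r_l1; rewrite /drop_det ltnNge size_t le_r_l1.
rewrite addrAC -drop_det_rec ?size_t //.
by case: l lt_l => [|l0] _; rewrite ?subr0 ?mul1r ?drop_det0 ?subrr ?mul0r.
Qed.

End Chains.

Lemma drop_det1_bounds (R : realDomainType) (t : seq R) :
  {in t, forall y, 2 <= y} -> 0 <= drop_det t 1 <= chain_det t - 1.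
Proof.
elim: t => [|y t IH] t_ge2; first by rewrite /drop_det /= chain_det_nil subrr lexx.
have /andP[d1_ge0 d1_le] :=
  IH (fun z zt => t_ge2 z (mem_behead (zt : z \in behead (y :: t)))).
have y_ge2 := t_ge2 y (mem_head y t).
rewrite drop_det1_cons chain_det_cons.
apply/andP; split; nra.
Qed.

Unset Implicit Arguments.
Section Grafting.
Variables (R : realFieldType) (m : nat) (n : 'I_m -> R) (e : 'I_m -> 'I_m -> nat)
  (s : 'I_m -> nat) (k : forall i : 'I_m, 'I_(s i) -> nat)
  (c : forall i : 'I_m, 'I_(s i) -> nat -> int).
Hypotheses (k_pos : forall i j, (1 <= k i j)%N)
  (c_first : forall i j, 1 <= c i j 0%N)
  (c_rest : forall i j (l : nat), (1 <= l < k i j)%N -> 2 <= c i j l).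

Local Notation p := (pC R m s k c).
Local Notation q := (qC R m s k c).

Definition hair i j : seq R := [seq (c i j l)%:~R | l <- iota 1 (k i j).-1].

Lemma size_hair i j : size (hair i j) = (k i j).-1.
Proof. by rewrite size_map size_iota. Qed.

Lemma qC_hair i j : q i j = chain_det (hair i j).
Proof. by []. Qed.

Lemma pC_cons i j : p i j = (c i j 0)%:~R * q i j - drop_det (hair i j) 1.
Proof. by rewrite /pC -(prednK (k_pos i j)) -chain_det_cons. Qed.

Lemma hair_ge2 i j : {in hair i j, forall y, 2 <= y}.
Proof.
move=> y /mapP[l]; rewrite mem_iota => l_range ->.
have c_ge2 : 2 <= c i j l by apply: c_rest; move: l_range (k_pos i j); lia.
by rewrite -(ler_int R) in c_ge2.
Qed.

Lemma hair_drop_det1_bounds i j : 0 <= drop_det (hair i j) 1 <= q i j - 1.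
Proof. exact: drop_det1_bounds (hair_ge2 i j). Qed.

Lemma qC_neq0 i j : q i j != 0.
Proof. by have /andP[d1_ge0 d1_le] := hair_drop_det1_bounds i j; rewrite gt_eqF //; lra. Qed.

Lemma pC_neq0 i j : p i j != 0.
Proof.
have /andP[d1_ge0 d1_le] := hair_drop_det1_bounds i j.
have c0_ge1 : 1 <= (c i j 0)%:~R :> R by rewrite ler1z c_first.
by rewrite gt_eqF // pC_cons; nra.
Qed.

Definition reduced_mark (v : 'I_m) : R := n v + \sum_(j < s v) p v j / q v j.

Local Notation tailV := (tailV m s k).
Local Notation hatM := (gmatrix (hat_mark R m n s k c) (hat_edge m e s k)).

Definition tail_vertex i j (l : 'I_(k i j).-1) : tailV :=
  Tagged (fun i => {j : 'I_(s i) & 'I_(k i j).-1}) (Tagged (fun j => 'I_(k i j).-1) l).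

Definition hair_of (x : tailV) : leafV m s := Tagged (fun i => 'I_(s i)) (tag (tagged x)).

Lemma hatM_other_hair x y : hair_of x != hair_of y -> hatM (inr x) (inr y) = 0.
Proof.
move=> hairs_neq; rewrite /gmatrix ifN; last by apply: contra hairs_neq => /eqP[->].
case: x y hairs_neq => [i [j l]] [i' [j' l']] hairs_neq; rewrite /hat_edge /tv_i /tv_j /=.
case: (eqVneq (i : nat) i') => [/val_inj eq_ii'|_]; last by rewrite oppr0.
subst i'; case: (eqVneq (j : nat) j') => [/val_inj eq_jj'|_]; last by rewrite oppr0.
by subst j'; rewrite eqxx in hairs_neq.
Qed.

Lemma hatM_hair i j (l l' : 'I_(k i j).-1) :
  hatM (inr (tail_vertex i j l)) (inr (tail_vertex i j l')) = chain_mx (hair i j) l l'.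
Proof.
rewrite /gmatrix /chain_mx.
have -> : (inr (tail_vertex i j l) == inr (tail_vertex i j l') :> hatV m s k) = (l == l' :> nat).
  apply/eqP/eqP => [[tl_eq]|/val_inj -> //].
  by rewrite (eq_from_Tagged (eq_from_Tagged tl_eq)).
case: (eqVneq (l : nat) l') => _; last by rewrite /hat_edge /= !eqxx.
by rewrite /hat_mark /hair (nth_map 0%N) ?size_iota ?nth_iota ?add1n.
Qed.

Lemma hatM_core a a' :
  hatM (inl a) (inl a') = if a == a' then hat_mark R m n s k c (inl a) else - (e a a')%:R.
Proof. by []. Qed.

Lemma hatM_core_tail a x :
  hatM (inl a) (inr x) = - ((a == tag x) && (tv_l m s k x == 0%N))%:R.
Proof. by []. Qed.

Lemma hatM_tail_core x a :
  hatM (inr x) (inl a) = - ((a == tag x) && (tv_l m s k x == 0%N))%:R.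
Proof. by []. Qed.

Lemma tail_det : fdet (fun x y : tailV => hatM (inr x) (inr y)) = \prod_i \prod_(j < s i) q i j.
Proof.
rewrite fdet_sigT_block => [|x y tags_neq]; last first.
  by apply: hatM_other_hair; apply: contra tags_neq => /eqP/(congr1 tag)/= ->.
apply: eq_bigr => i _; rewrite fdet_sigT_block => [|x y tags_neq]; last first.
  apply: hatM_other_hair; apply: contra tags_neq => /eqP hairs_eq.
  by rewrite (eq_from_Tagged hairs_eq).
apply: eq_bigr => j _; rewrite qC_hair (chain_det_fdet (size_hair i j)).
by apply: eq_fdet => l l'; rewrite hatM_hair.
Qed.

Definition hair_weight i j (l : nat) : R := - drop_det (hair i j) l.+1 / q i j.

Definition hair_solution (x : tailV) (a : 'I_m) : R :=
  if tag x == a then hair_weight (tag x) (tag (tagged x)) (tv_l m s k x) else 0.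

Lemma hair_solve x a :
  \sum_y hatM (inr x) (inr y) * hair_solution y a = hatM (inr x) (inl a).
Proof.
case: x => i [j l].
rewrite big_sigT (bigD1 i) //= [X in _ + X]big1 ?addr0 => [|i' i'_neq]; last first.
  apply: big1 => y _; rewrite hatM_other_hair ?mul0r //.
  by apply: contra i'_neq => /eqP/(congr1 tag)/= ->.
rewrite big_sigT (bigD1 j) //= [X in _ + X]big1 ?addr0 => [|j' j'_neq]; last first.
  apply: big1 => l' _; rewrite hatM_other_hair ?mul0r //.
  by apply: contra j'_neq => /eqP hairs_eq; move: (eq_from_Tagged hairs_eq) => /= ->.
under eq_bigr => l' _ do rewrite hatM_hair.
rewrite hatM_tail_core /hair_solution /=; case: (eqVneq i a) => _; last first.
  by rewrite big1 ?oppr0 // => l' _; rewrite mulr0.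
under eq_bigr => l' _ do rewrite /hair_weight mulNr mulrN mulrA /=.
rewrite sumrN -mulr_suml (chain_mx_drop_det (size_hair i j)) //.
by rewrite -qC_hair mulfK ?qC_neq0.
Qed.

Lemma core_tail_sum a a' :
  \sum_x hatM (inl a) (inr x) * hair_solution x a'
    = if a == a' then \sum_(j < s a) drop_det (hair a j) 1 / q a j else 0.
Proof.
rewrite big_sigT (bigD1 a) //= [X in _ + X]big1 ?addr0 => [|i i_neq]; last first.
  by apply: big1 => x _; rewrite hatM_core_tail /= eq_sym (negbTE i_neq) oppr0 mul0r.
case: (eqVneq a a') => [<-|a_neq]; last first.
  by rewrite big1 // => x _; rewrite /hair_solution /= (negbTE a_neq) mulr0.
rewrite big_sigT; apply: eq_bigr => j _.
under eq_bigr => l _ do rewrite hatM_core_tail /hair_solution /tv_l /= !eqxx /= mulNr.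
rewrite sumrN (sum_nat_delta (hair_weight a j)).
case: ltnP => [_|]; first by rewrite /hair_weight mulNr opprK.
rewrite leqn0 -(size_hair a j) size_eq0 => /eqP ->.
by rewrite /drop_det /= mul0r oppr0.
Qed.

Lemma hat_schur_entry a a' :
  hatM (inl a) (inl a') - \sum_x hatM (inl a) (inr x) * hair_solution x a'
    = gmatrix reduced_mark e a a'.
Proof.
rewrite hatM_core core_tail_sum /gmatrix; case: (eqVneq a a') => _; last by rewrite subr0.
rewrite /reduced_mark -addrA -sumrB; congr (_ + _); apply: eq_bigr => j _.
by rewrite pC_cons; field; apply: qC_neq0.
Qed.

Lemma gdet_hat :
  gdet (hat_mark R m n s k c) (hat_edge m e s k)
    = gdet reduced_mark e * \prod_i \prod_(j < s i) q i j.
Proof. by rewrite !gdetE (fdet_schur hair_solve) tail_det (eq_fdet hat_schur_entry) mulrC. Qed.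

Local Notation tildeM := (gmatrix (tilde_mark R m n s k c) (tilde_edge m e s)).

Definition leaf_solution (x : leafV m s) (a : 'I_m) : R :=
  if tag x == a then p (tag x) (tagged x) / q (tag x) (tagged x) else 0.

Lemma tildeM_leaves x y :
  tildeM (inr x) (inr y)
    = if x == y then - (q (tag x) (tagged x) / p (tag x) (tagged x)) else 0.
Proof.
rewrite /gmatrix; have -> : (inr x == inr y :> tildeV m s) = (x == y) by [].
by case: eqP => // _; rewrite oppr0.
Qed.

Lemma tildeM_core a a' : tildeM (inl a) (inl a') = if a == a' then n a else - (e a a')%:R.
Proof. by []. Qed.

Lemma leaf_solve x a :
  \sum_y tildeM (inr x) (inr y) * leaf_solution y a = tildeM (inr x) (inl a).
Proof.
rewrite (bigD1 x) //= big1 ?addr0 => [|y y_neq]; last first.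
  by rewrite tildeM_leaves eq_sym (negbTE y_neq) mul0r.
rewrite tildeM_leaves eqxx /leaf_solution /gmatrix /= eq_sym.
case: eqP => _; last by rewrite mulr0 oppr0.
by rewrite mulNr mulrA divfK ?pC_neq0 // mulfV ?qC_neq0.
Qed.

Lemma leaf_det :
  fdet (fun x y : leafV m s => tildeM (inr x) (inr y)) = \prod_i \prod_(j < s i) - (q i j / p i j).
Proof.
rewrite fdet_diag => [|x y xy_neq]; last by rewrite tildeM_leaves (negbTE xy_neq).
by rewrite big_sigT; apply: eq_bigr => i _; apply: eq_bigr => j _; rewrite tildeM_leaves eqxx.
Qed.

Lemma tilde_schur_entry a a' :
  tildeM (inl a) (inl a') - \sum_x tildeM (inl a) (inr x) * leaf_solution x a'
    = gmatrix reduced_mark e a a'.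
Proof.
rewrite tildeM_core big_sigT (bigD1 a) //= [X in _ - (_ + X)]big1 ?addr0 => [|i i_neq].
- under eq_bigr => j _ do rewrite /gmatrix /= eqxx /leaf_solution /=.
  rewrite /gmatrix; case: (eqVneq a a') => _.
    by under eq_bigr => j _ do rewrite mulN1r; rewrite sumrN opprK.
  by rewrite big1 ?subr0 // => j _; rewrite mulr0.
- by apply: big1 => j _; rewrite /gmatrix /= eq_sym (negbTE i_neq) oppr0 mul0r.
Qed.

Lemma gdet_tilde :
  gdet (tilde_mark R m n s k c) (tilde_edge m e s)
    = (\prod_i \prod_(j < s i) - (q i j / p i j)) * gdet reduced_mark e.
Proof. by rewrite !gdetE (fdet_schur leaf_solve) leaf_det (eq_fdet tilde_schur_entry). Qed.

End Grafting.

Theorem theorem2p7 (R : realFieldType) (m : nat) (n : 'I_m -> R)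
  (e : 'I_m -> 'I_m -> nat)
  (e_sym : forall u v, e u v = e v u) (e_noloop : forall u, e u u = 0%N)
  (s : 'I_m -> nat) (k : forall i : 'I_m, 'I_(s i) -> nat)
  (c : forall i : 'I_m, 'I_(s i) -> nat -> int)
  (k_pos : forall i j, (1 <= k i j)%N)
  (c_first : forall i j, 1 <= c i j 0%N)
  (c_rest : forall i j (l : nat), (1 <= l < k i j)%N -> 2 <= c i j l) :
  gdet (hat_mark R m n s k c) (hat_edge m e s k)
    = gdet (fun v => n v + \sum_(j < s v) pC R m s k c v j / qC R m s k c v j) e
      * \prod_(i < m) \prod_(j < s i) qC R m s k c i j
  /\
  gdet (hat_mark R m n s k c) (hat_edge m e s k)
    = gdet (tilde_mark R m n s k c) (tilde_edge m e s)
      * \prod_(i < m) \prod_(j < s i) (- pC R m s k c i j).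
Proof.
have hat := gdet_hat R m n e s k c k_pos c_rest.
split; first exact: hat.
rewrite hat (gdet_tilde R m n e s k c k_pos c_first c_rest) mulrAC mulrC; congr (_ * _).
rewrite -big_split; apply: eq_bigr => i _; rewrite -big_split; apply: eq_bigr => j _ /=.
by rewrite mulNr mulrN opprK divfK // (pC_neq0 R m s k c k_pos c_first c_rest).
Qed.
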